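(* Suppose the Lipschitz assumption holds, and let $K^3_t>0$ be a constant with $\|\hat f_t(z_1,\gamma)-\hat f_t(z_2,\gamma)\|_\infty\le K^3_t\|z_1-z_2\|_\infty$ for all $\gamma\in\mathcal G$, $z_1,z_2\in\mathcal I(\mathcal X)$. Let $t\in\mathbb N_T$, $\gamma_t\in\mathcal G$, let $m_t\in\mathcal M_n$ be the empirical distribution of the agents' states at time $t$, and $z_t\in\Delta(\mathcal X)$. Suppose every agent uses $u^i_t=\gamma_t(x^i_t)$, let $m_{t+1}$ be the resulting empirical distribution at time $t+1$, and let $z_{t+1}=\hat f_t(z_t,\gamma_t)$. Then $$\mathbb E\big[\|m_{t+1}-z_{t+1}\|_\infty\big]\le K^3_t\|m_t-z_t\|_\infty+\mathcal O(1/\sqrt n).$$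
   Context: Fix $n\in\mathbb N$ agents, $T\in\mathbb N$, finite sets $\mathcal X,\mathcal U,\mathcal W$; $\mathbb N_k=\{1,\dots,k\}$; $\mathcal I(\mathcal X)=[0,1]^{\mathcal X}$; $\Delta(\mathcal X)$ the probability vectors on $\mathcal X$; $\mathcal M_n=\{m\in\Delta(\mathcal X):m(x)\in\{0,\tfrac1n,\dots,1\}\}$. Agent $i$ has state $x^i_t$ and action $u^i_t$; mean-field $m_t(x)=\frac1n\sum_i\mathbb 1(x^i_t=x)$; dynamics $x^i_{t+1}=f_t(x^i_t,u^i_t,w^i_t,m_t)$ with $f_t:\mathcal X\times\mathcal U\times\mathcal W\times\mathcal I(\mathcal X)\to\mathcal X$, where $w^1_t,\dots,w^n_t$ are i.i.d. with law $\mathbb P(w_t=\cdot)$ and independent of the states at time $t$. $\mathbb P(y|x,u,z)=\sum_w\mathbb 1(f_t(x,u,w,z)=y)\mathbb P(w_t=w)$; costs $\ell_t:\mathcal X\times\mathcal U\times\mathcal I(\mathcal X)\to\mathbb R_{\ge0}$. Lipschitz assumption: constants $K^1_t,K^2_t>0$ with $|\mathbb P(y|x,u,z_1)-\mathbb P(y|x,u,z_2)|\le K^1_t\|z_1-z_2\|_\infty$, $|\ell_t(x,u,z_1)-\ell_t(x,u,z_2)|\le K^2_t\|z_1-z_2\|_\infty$ for all $x,y,u$, $z_1,z_2\in\mathcal I(\mathcal X)$. $\mathcal G$ is the set of maps $\gamma:\mathcal X\to\mathcal U$; $\hat f_t(z,\gamma)(y)=\sum_x z(x)\mathbb P(y|x,\gamma(x),z)$.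 Model data do not depend on $n$; $\mathcal O(1/\sqrt n)$ denotes a quantity bounded by $C/\sqrt n$ with $C$ independent of $n$, $m_t$, $z_t$, $\gamma_t$. *)

From HB Require Import structures.
From mathcomp Require Import all_boot all_order all_algebra.
From mathcomp Require Import reals.
Set Implicit Arguments. Unset Strict Implicit. Unset Printing Implicit Defensive.
Import Order.TTheory GRing.Theory Num.Theory.
Local Open Scope ring_scope.

Section MF.
Variable R : realType.
Variables X U W : finType.

Definition supn (v : {ffun X -> R}) : R := \big[Num.max/0]_(x : X) `|v x|.

Definition inI (z : {ffun X -> R}) : Prop := forall x, 0 <= z x <= 1.

Definition inDelta (z : {ffun X -> R}) : Prop :=
  (forall x, 0 <= z x) /\ \sum_(x : X) z x = 1.

Definition trans (f : nat -> X -> U -> W -> {ffun X -> R} -> X)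
  (pw : nat -> W -> R) (t : nat) (y x : X) (u : U) (z : {ffun X -> R}) : R :=
  \sum_(w : W) (f t x u w z == y)%:R * pw t w.

Definition fhat (f : nat -> X -> U -> W -> {ffun X -> R} -> X) (pw : nat -> W -> R) (t : nat) (z : {ffun X -> R}) (g : X -> U) : {ffun X -> R} :=
  [ffun y => \sum_(x : X) z x * trans f pw t y x (g x) z].

Definition emp (n : nat) (xs : 'I_n -> X) : {ffun X -> R} :=
  [ffun x => (#|[set i | xs i == x]|)%:R / n%:R].

Definition next_states (f : nat -> X -> U -> W -> {ffun X -> R} -> X) (t : nat) (n : nat) (xs : 'I_n -> X) (g : X -> U)
  (w : 'I_n -> W) : 'I_n -> X :=
  fun i => f t (xs i) (g (xs i)) (w i) (emp xs).

(* E[ || m_{t+1} - z_{t+1} ||_inf ] given the states at time t,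
   the noises w^1..w^n being i.i.d. with law pw t *)
Definition exp_err (f : nat -> X -> U -> W -> {ffun X -> R} -> X) (pw : nat -> W -> R) (t : nat) (n : nat) (xs : 'I_n -> X) (g : X -> U)
  (z : {ffun X -> R}) : R :=
  \sum_(w : {ffun 'I_n -> W})
    (\prod_(i < n) pw t (w i)) *
    supn (emp (next_states f t xs g w) - fhat f pw t z g).
End MF.

From HB Require Import structures.
From mathcomp Require Import all_boot all_order all_algebra.
From mathcomp Require Import reals.
From mathcomp Require Import ring lra.

(* Given the states at time t, the coordinate m_{t+1}(y) - \hat f_t(m_t, gamma)(y)
   is the average of the n independent centred variables
   1(x^i_{t+1} = y) - P(y | x^i_t, gamma(x^i_t), m_t), each bounded by 1.
   Cross terms vanish by independence, so the second moment of their sum is at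
   most n, and by Jensen the mean absolute value of the average is at most
   1/sqrt n.  Summing over y bounds the sup-norm by |X|/sqrt n; the Lipschitz
   bound on \hat f_t takes care of \hat f_t(m_t) - \hat f_t(z_t). *)

Set Implicit Arguments. Unset Strict Implicit. Unset Printing Implicit Defensive.
Import Order.TTheory GRing.Theory Num.Theory.
Local Open Scope ring_scope.

Section Expectation.
Variables (R : realDomainType) (I W : finType) (p : W -> R).
Hypothesis p_ge0 : forall v, 0 <= p v.
Hypothesis p_sum1 : \sum_v p v = 1.

Definition expect (F : {ffun I -> W} -> R) : R :=
  \sum_(w : {ffun I -> W}) (\prod_i p (w i)) * F w.

Lemma eq_expect F G : F =1 G -> expect F = expect G.
Proof. by move=> FG; apply: eq_bigr => w _; rewrite FG. Qed.

Lemma expectD F G : expect (fun w => F w + G w) = expect F + expect G.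
Proof. by rewrite /expect -big_split; apply: eq_bigr => w _; rewrite mulrDr. Qed.

Lemma expectZ c F : expect (fun w => c * F w) = c * expect F.
Proof. by rewrite /expect big_distrr; apply: eq_bigr => w _; rewrite mulrCA. Qed.

Lemma expect_sum (J : finType) (F : J -> {ffun I -> W} -> R) :
  expect (fun w => \sum_j F j w) = \sum_j expect (F j).
Proof. by rewrite /expect exchange_big; apply: eq_bigr => w _; rewrite big_distrr. Qed.

Lemma expect_prod (h : I -> W -> R) :
  expect (fun w => \prod_i h i (w i)) = \prod_i \sum_v p v * h i v.
Proof. by rewrite bigA_distr_bigA; apply: eq_bigr => w _; rewrite big_split. Qed.

Lemma expect_cst c : expect (fun _ => c) = c.
Proof.
have expect1 : expect (fun _ => 1) = 1.
  rewrite (@eq_expect _ (fun w => \prod_i (fun _ _ => 1) i (w i))) => [|w].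
    by rewrite (expect_prod (fun _ _ => 1)) big1 // => i _; under eq_bigr do rewrite mulr1.
  by rewrite big1.
by rewrite -[c in RHS]mulr1 -expect1 -expectZ; apply: eq_expect => w; rewrite mulr1.
Qed.

Lemma ler_expect F G : (forall w, F w <= G w) -> expect F <= expect G.
Proof.
by move=> FG; apply: ler_sum => w _; apply: ler_wpM2l => //; apply: prodr_ge0.
Qed.

Lemma expect_ge0 F : (forall w, 0 <= F w) -> 0 <= expect F.
Proof. by move=> F_ge0; apply: sumr_ge0 => w _; rewrite mulr_ge0 ?prodr_ge0. Qed.

Lemma sqr_expect_le F : expect F ^+ 2 <= expect (fun w => F w ^+ 2).
Proof.
set mu := expect F.
have : 0 <= expect (fun w => (F w - mu) ^+ 2).
  by apply: expect_ge0 => w; apply: sqr_ge0.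
rewrite (@eq_expect _ (fun w => F w ^+ 2 + (- (2 * mu) * F w + mu ^+ 2))); last first.
  by move=> w; rewrite sqrrB; ring.
by rewrite !expectD expectZ expect_cst -/mu; nra.
Qed.

Section Centered.
Variable c : I -> W -> R.
Hypothesis c_le1 : forall i v, `|c i v| <= 1.
Hypothesis c_centered : forall i, \sum_v p v * c i v = 0.

Lemma expect_mul_centered i j : i != j ->
  expect (fun w => c i (w i) * c j (w j)) = 0.
Proof.
move=> neq_ij.
pose h k v := if k == i then c i v else if k == j then c j v else 1.
have -> : expect (fun w => c i (w i) * c j (w j)) = expect (fun w => \prod_k h k (w k)).
  apply: eq_expect => w; rewrite (bigD1 i) //= (bigD1 j) 1?eq_sym //= big1.
    by rewrite /h eqxx eq_sym (negbTE neq_ij) eqxx mulr1.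
  by move=> k /andP[ki kj]; rewrite /h (negbTE ki) (negbTE kj).
rewrite expect_prod (bigD1 i) //= (eq_bigr (fun v => p v * c i v)) => [|v _].
  by rewrite c_centered mul0r.
by rewrite /h eqxx.
Qed.

Lemma expect_sqr_sum_centered :
  expect (fun w => (\sum_i c i (w i)) ^+ 2) <= #|I|%:R.
Proof.
rewrite (@eq_expect _ (fun w => \sum_i \sum_j c i (w i) * c j (w j))); last first.
  by move=> w; rewrite expr2 big_distrl; apply: eq_bigr => i _; rewrite big_distrr.
rewrite expect_sum -sum1_card natr_sum; apply: ler_sum => i _.
rewrite expect_sum (bigD1 i) //= big1 => [|j ji]; last first.
  by rewrite expect_mul_centered // eq_sym.
rewrite addr0 -(expect_cst 1); apply: ler_expect => w.
by rewrite -expr2 -real_normK ?num_real // exprn_ile1.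
Qed.

End Centered.
End Expectation.

Section SecondMoment.
Variables (R : rcfType) (I W : finType) (p : W -> R).
Hypothesis p_ge0 : forall v, 0 <= p v.
Hypothesis p_sum1 : \sum_v p v = 1.

Lemma expect_norm_le_sqrt (F : {ffun I -> W} -> R) :
  expect p (fun w => `|F w|) <= Num.sqrt (expect p (fun w => F w ^+ 2)).
Proof.
have mean_ge0 : 0 <= expect p (fun w => `|F w|) by apply: expect_ge0.
rewrite -(ger0_norm mean_ge0) -sqrtr_sqr ler_sqrt; last first.
  by apply: expect_ge0 => // w; apply: sqr_ge0.
have -> : expect p (fun w => F w ^+ 2) = expect p (fun w => `|F w| ^+ 2).
  by apply: eq_expect => w; rewrite real_normK ?num_real.
exact: sqr_expect_le.
Qed.

Lemma expect_norm_sum_centered (c : I -> W -> R) :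
  (forall i v, `|c i v| <= 1) -> (forall i, \sum_v p v * c i v = 0) ->
  expect p (fun w => `|\sum_i c i (w i)|) <= Num.sqrt #|I|%:R.
Proof.
move=> c_le1 c_centered; apply: le_trans (expect_norm_le_sqrt _) _.
by rewrite ler_sqrt // expect_sqr_sum_centered.
Qed.

End SecondMoment.

Section SupNorm.
Variables (R : realType) (X : finType).
Implicit Types v : {ffun X -> R}.

Lemma supn_ge0 v : 0 <= supn v.
Proof. by apply: (big_ind (fun a => 0 <= a)) => // a b a_ge0 b_ge0; rewrite le_max a_ge0. Qed.

Lemma supn_le v B : 0 <= B -> (forall x, `|v x| <= B) -> supn v <= B.
Proof.
by move=> B_ge0 vB; apply: (big_ind (fun a => a <= B)) => // a b aB bB; rewrite ge_max aB bB.
Qed.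

Lemma ler_norm_supn v x : `|v x| <= supn v.
Proof. by rewrite /supn (bigD1 x) //= le_max lexx. Qed.

Lemma supnD v1 v2 : supn (v1 + v2) <= supn v1 + supn v2.
Proof.
apply: supn_le => [|x]; first by rewrite addr_ge0 ?supn_ge0.
by rewrite ffunE (le_trans (ler_normD _ _)) // lerD ?ler_norm_supn.
Qed.

Lemma supn_le_sum v : supn v <= \sum_x `|v x|.
Proof.
apply: supn_le => [|x]; first exact: sumr_ge0.
by rewrite (bigD1 x) //= lerDl sumr_ge0.
Qed.

End SupNorm.

Section EmpiricalDistribution.
Variables (R : realType) (X : finType) (n : nat) (xs : 'I_n -> X).

Lemma empE y : emp R xs y = n%:R^-1 * \sum_i (xs i == y)%:R.
Proof.
rewrite ffunE mulrC -sum1dep_card natr_sum big_mkcond.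
by congr (_ * _); apply: eq_bigr => i _; case: (_ == _).
Qed.

Lemma sum_empM (h : X -> R) : \sum_x emp R xs x * h x = n%:R^-1 * \sum_i h (xs i).
Proof.
under eq_bigr do rewrite empE -mulrA big_distrl.
rewrite -big_distrr exchange_big /=; congr (_ * _); apply: eq_bigr => i _.
rewrite (bigD1 (xs i)) //= eqxx mul1r big1 ?addr0 // => x.
by rewrite eq_sym => /negbTE ->; rewrite mul0r.
Qed.

Lemma emp_inI : inI (emp R xs).
Proof.
move=> x; rewrite ffunE divr_ge0 //=.
have [n0|n_gt0] := posnP n.
  by rewrite (_ : n%:R = 0) ?n0 // invr0 mulr0.
by rewrite ler_pdivrMr ?ltr0n // mul1r ler_nat -[n in (_ <= n)%N]card_ord max_card.
Qed.

End EmpiricalDistribution.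

Lemma inDelta_inI (R : realType) (X : finType) (z : {ffun X -> R}) : inDelta z -> inI z.
Proof.
by move=> [z_ge0 z_sum1] x; rewrite z_ge0 -z_sum1 (bigD1 x) //= lerDl sumr_ge0.
Qed.

Section OneStep.
Variables (R : realType) (X U W : finType).
Variables (f : nat -> X -> U -> W -> {ffun X -> R} -> X) (pw : nat -> W -> R) (t : nat).
Hypothesis pw_ge0 : forall v, 0 <= pw t v.
Hypothesis pw_sum1 : \sum_v pw t v = 1.

Definition transition_noise (y x : X) (u : U) (z : {ffun X -> R}) (v : W) : R :=
  (f t x u v z == y)%:R - trans f pw t y x u z.

Lemma trans_ge0 y x u z : 0 <= trans f pw t y x u z.
Proof. by apply: sumr_ge0 => v _; rewrite mulr_ge0. Qed.

Lemma trans_le1 y x u z : trans f pw t y x u z <= 1.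
Proof.
rewrite -pw_sum1; apply: ler_sum => v _.
by rewrite ler_piMl //; case: (_ == _).
Qed.

Lemma transition_noise_le1 y x u z v : `|transition_noise y x u z v| <= 1.
Proof.
have := trans_ge0 y x u z; have := trans_le1 y x u z.
by rewrite /transition_noise ler_norml; case: (_ == _) => /=; lra.
Qed.

Lemma transition_noise_centered y x u z : \sum_v pw t v * transition_noise y x u z v = 0.
Proof.
under eq_bigr do rewrite mulrBr.
rewrite sumrB -big_distrl pw_sum1 /= mul1r; apply/eqP; rewrite subr_eq0; apply/eqP/eq_bigr => v _.
by rewrite mulrC.
Qed.

Variables (n : nat) (xs : 'I_n -> X) (g : X -> U).

Lemma emp_next_sub_fhatE (w : {ffun 'I_n -> W}) y :
  (emp R (next_states f t xs g w) - fhat f pw t (emp R xs) g) y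
  = n%:R^-1 * \sum_i transition_noise y (xs i) (g (xs i)) (emp R xs) (w i).
Proof.
rewrite ffunE [X in _ + X]ffunE.
have -> : fhat f pw t (emp R xs) g y = n%:R^-1 * \sum_i trans f pw t y (xs i) (g (xs i)) (emp R xs).
  by rewrite ffunE (sum_empM xs (fun x => trans f pw t y x (g x) (emp R xs))).
by rewrite empE /transition_noise sumrB mulrBr.
Qed.

Lemma expect_norm_emp_next_sub_fhat y : (0 < n)%N ->
  expect (pw t) (fun w => `|(emp R (next_states f t xs g w) - fhat f pw t (emp R xs) g) y|)
  <= (Num.sqrt n%:R)^-1.
Proof.
move=> n_gt0; have n_pos : 0 < n%:R :> R by rewrite ltr0n.
rewrite (@eq_expect _ _ _ (pw t) _ (fun w => n%:R^-1 *
   `|\sum_i transition_noise y (xs i) (g (xs i)) (emp R xs) (w i)|)); last first.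
  by move=> w; rewrite emp_next_sub_fhatE normrM ger0_norm // invr_ge0 ltW.
have sqrt_n_pos : 0 < Num.sqrt n%:R :> R by rewrite sqrtr_gt0.
have -> : (Num.sqrt n%:R)^-1 = n%:R^-1 * Num.sqrt n%:R :> R.
  have := sqr_sqrtr (ltW n_pos); set s := Num.sqrt _ => <-.
  by rewrite expr2 invfM mulrVK // unitfE gt_eqF.
rewrite expectZ; apply: ler_wpM2l; first by rewrite invr_ge0 ltW.
rewrite -[in Num.sqrt n%:R](card_ord n).
apply: (expect_norm_sum_centered pw_ge0 pw_sum1
  (c := fun i => transition_noise y (xs i) (g (xs i)) (emp R xs))) => i.
- exact: transition_noise_le1.
- exact: transition_noise_centered.
Qed.

Lemma exp_err_le z : (0 < n)%N ->
  exp_err f pw t xs g z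
  <= supn (fhat f pw t (emp R xs) g - fhat f pw t z g) + #|X|%:R / Num.sqrt n%:R.
Proof.
move=> n_gt0; set m := emp R xs.
have split_err w : supn (emp R (next_states f t xs g w) - fhat f pw t z g)
    <= \sum_y `|(emp R (next_states f t xs g w) - fhat f pw t m g) y|
       + supn (fhat f pw t m g - fhat f pw t z g).
  set e := emp R _; set a := fhat f pw t m g; set b := fhat f pw t z g.
  have -> : e - b = (e - a) + (a - b) by rewrite addrA subrK.
  exact: le_trans (supnD _ _) (lerD (supn_le_sum _) (lexx _)).
change (expect (pw t) (fun w => supn (emp R (next_states f t xs g w) - fhat f pw t z g))
  <= supn (fhat f pw t m g - fhat f pw t z g) + #|X|%:R / Num.sqrt n%:R).
apply: le_trans (ler_expect pw_ge0 split_err) _.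
rewrite expectD expect_cst // expect_sum addrC lerD2l.
apply: le_trans (ler_sum _ (fun y _ => expect_norm_emp_next_sub_fhat y n_gt0)) _.
by rewrite sumr_const mulrC mulr_natr.
Qed.
End OneStep.

Theorem lemma5 (R : realType) (X U W : finType) (T : nat)
  (f : nat -> X -> U -> W -> {ffun X -> R} -> X)
  (pw : nat -> W -> R)
  (ell : nat -> X -> U -> {ffun X -> R} -> R)
  (K1 K2 K3 : nat -> R)
  (hpw0 : forall t w, 0 <= pw t w)
  (hpw1 : forall t, \sum_(w : W) pw t w = 1)
  (hell0 : forall t x u z, 0 <= ell t x u z)
  (hK1 : forall t, 0 < K1 t) (hK2 : forall t, 0 < K2 t) (hK3 : forall t, 0 < K3 t)
  (hLipP : forall t y x u z1 z2, inI z1 -> inI z2 ->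
     `|trans f pw t y x u z1 - trans f pw t y x u z2| <= K1 t * supn (z1 - z2))
  (hLipl : forall t x u z1 z2, inI z1 -> inI z2 ->
     `|ell t x u z1 - ell t x u z2| <= K2 t * supn (z1 - z2))
  (hLipf : forall t (g : X -> U) z1 z2, inI z1 -> inI z2 ->
     supn (fhat f pw t z1 g - fhat f pw t z2 g) <= K3 t * supn (z1 - z2))
  (t : nat) (ht : (1 <= t <= T)%N) :
  exists C : R, forall (n : nat) (xs : 'I_n -> X) (g : X -> U) (z : {ffun X -> R}),
    (0 < n)%N -> inDelta z ->
    exp_err f pw t xs g z
      <= K3 t * supn (emp R xs - z) + C / Num.sqrt (n%:R).
Proof.
exists #|X|%:R => n xs g z n_gt0 z_Delta.
apply: le_trans (exp_err_le f (hpw0 t) (hpw1 t) xs g z n_gt0) _.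
rewrite lerD2r hLipf //; [exact: emp_inI | exact: inDelta_inI].
Qed.
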